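(* Let $p$ be a prime number and let $x,y,z\in\mathbb{N}$ (positive integers) with $x\le y\le z$ satisfy $$\frac{4}{p}=\frac{1}{x}+\frac{1}{y}+\frac{1}{z}.$$ Then $$4xy-(x+y)p=\gcd(y,p)\,\gcd(xy,\,x+y).$$
   Context: $\mathbb{N}$ denotes the positive integers. *)

From mathcomp Require Import all_boot all_order all_algebra.

From mathcomp Require Import all_boot all_order all_algebra.
From mathcomp Require Import zify ring.
Import GRing.Theory Num.Theory.

(* Clearing denominators gives 4xyz = p(yz + xz + xy), so D := 4xy - (x + y)p
   satisfies D z = p x y.  The number h := gcd(xy, x + y) divides D, and
   gcd(D, xy) divides both xy p and (x + y) p, whence D | p^2 h and D = p^m h
   with m <= 2.  The case m = 2 would give p h z = x y, impossible as x < p and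
   y <= z; and p divides D / h exactly when p divides y:
   if p | y then p divides D but not h; conversely p | D gives p | 4xy, and
   p | 4 only for p = 2, x = 1, where the equation forces y = 2.
   Hence D / h = gcd(y, p). *)

Lemma dvdn_sq_gcd (a b c d p : nat) :
  d %| p * a -> d + b * p = c * a -> d %| p ^ 2 * gcdn a b.
Proof.
move=> d_pa d_eq.
set e := gcdn d a.
have d_pe : d %| p * e by rewrite /e muln_gcdr dvdn_gcd d_pa dvdn_mull.
have e_bp : e %| b * p.
  by rewrite -(addKn d (b * p)) d_eq dvdn_sub ?dvdn_mull ?dvdn_gcdl ?dvdn_gcdr.
have e_pg : e %| p * gcdn a b.
  by rewrite muln_gcdr dvdn_gcd dvdn_mull ?dvdn_gcdr // mulnC.
by rewrite expnS expn1 -mulnA (dvdn_trans d_pe) ?dvdn_mul.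
Qed.

Section FourOverPrime.

Context {p x y z : nat}.
Hypotheses (p_pr : prime p) (x_gt0 : 0 < x) (le_xy : x <= y) (le_yz : y <= z).
Hypothesis fourE : 4 * x * y * z = p * (y * z + x * z + x * y).

Local Notation D := (4 * (x * y) - (x + y) * p).

Let y_gt0 : 0 < y. Proof. exact: leq_trans le_xy. Qed.
Let z_gt0 : 0 < z. Proof. exact: leq_trans le_yz. Qed.

Lemma four_mul_split : (x + y) * p * z + p * (x * y) = 4 * (x * y) * z.
Proof. by rewrite !mulnA fourE; ring. Qed.

Lemma leq_sum_mul_four : (x + y) * p <= 4 * (x * y).
Proof. by rewrite -(leq_pmul2r z_gt0) -four_mul_split leq_addr. Qed.

Lemma defect_mulE : D * z = p * (x * y).
Proof. by rewrite mulnBl -four_mul_split addKn. Qed.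

Lemma ltn_x_prime : x < p.
Proof.
have le_sum : y * z + x * z + x * y <= 3 * (y * z).
  by rewrite -[3]/(1 + 1 + 1) !mulnDl mul1n !leq_add ?leq_mul.
have : 4 * x * (y * z) <= 3 * p * (y * z).
  by rewrite !mulnA fourE -!mulnA mulnCA leq_mul2l le_sum orbT.
rewrite leq_pmul2r ?muln_gt0 ?y_gt0 //; lia.
Qed.

Local Notation h := (gcdn (x * y) (x + y)).

Let h_gt0 : 0 < h. Proof. by rewrite gcdn_gt0 addn_gt0 x_gt0 orbT. Qed.

Lemma gcd_dvdn_defect : h %| D.
Proof. by apply: dvdn_sub; [apply/dvdn_mull/dvdn_gcdl | apply/dvdn_mulr/dvdn_gcdr]. Qed.

Lemma defect_dvdn_sq_gcd : D %| p ^ 2 * h.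
Proof.
apply: (dvdn_sq_gcd _ _ 4); last by rewrite subnK ?leq_sum_mul_four.
by apply/dvdnP; exists z; rewrite -defect_mulE mulnC.
Qed.

Lemma defect_neq_sq_gcd : D != p ^ 2 * h.
Proof.
apply/eqP => defD.
have defxy : p * (h * z) = x * y.
  apply/eqP; rewrite -(eqn_pmul2l (prime_gt0 p_pr)) -defect_mulE defD.
  by rewrite !mulnA.
have : x * y < p * (h * z).
  apply: (@leq_trans (p * y)); first by rewrite ltn_pmul2r ?ltn_x_prime.
  by rewrite leq_mul2l (leq_trans le_yz (leq_pmull _ h_gt0)) orbT.
by rewrite defxy ltnn.
Qed.

Lemma prime_dvdn_cofactor k : D = k * h -> (p %| k) = (p %| y).
Proof.
move=> Dk; have p_ndvd_x : ~~ (p %| x) by rewrite gtnNdvd ?ltn_x_prime.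
apply/idP/idP => [p_k | p_y].
- have : p %| 4 * (x * y).
    rewrite -(subnK leq_sum_mul_four) Dk.
    by apply: dvdn_add; [apply: dvdn_mulr | apply: dvdn_mull].
  rewrite !Euclid_dvdM // (negbTE p_ndvd_x) /= => /orP[p_4 | //].
  have p2 : p = 2.
    by apply/eqP; rewrite -dvdn_prime2 // -[_ %| 2]orbb -Euclid_dvdM.
  have x1 : x = 1 by move: ltn_x_prime; rewrite p2; lia.
  have y2 : y = 2 by move: fourE; rewrite p2 x1; nia.
  by rewrite p2 y2.
- have p_ndvd_h : ~~ (p %| h).
    apply: contra p_ndvd_x => /dvdn_trans/(_ (dvdn_gcdr _ _)).
    by rewrite dvdn_addl.
  have : p %| D by rewrite dvdn_sub ?dvdn_mull.
  by rewrite Dk Euclid_dvdM // (negbTE p_ndvd_h) orbF.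
Qed.

Lemma defectE : D = gcdn y p * h.
Proof.
have [k Dk] := dvdnP gcd_dvdn_defect.
have : k %| p ^ 2 by rewrite -(dvdn_pmul2r h_gt0) -Dk defect_dvdn_sq_gcd.
case/(dvdn_pfactor _ _ p_pr) => [[|[|[|m]]] // _ defk];
  move: (prime_dvdn_cofactor _ Dk); rewrite Dk defk.
- rewrite expn0 dvdn1 gtn_eqF ?prime_gt1 // => /esym/negbT.
  by rewrite -prime_coprime // coprime_sym => /eqP ->.
- by rewrite dvdnn => /esym/gcdn_idPr ->.
- by move: defect_neq_sq_gcd; rewrite Dk defk eqxx.
Qed.

End FourOverPrime.

Local Open Scope ring_scope.

Lemma unit_fractions_natE {R : numFieldType} {p x y z : nat} :
  (0 < p)%N -> (0 < x)%N -> (0 < y)%N -> (0 < z)%N ->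
  (4%:R / p%:R : R) = 1 / x%:R + 1 / y%:R + 1 / z%:R ->
  (4 * x * y * z = p * (y * z + x * z + x * y))%N.
Proof.
rewrite -!(ltr0n R) => /lt0r_neq0 p0 /lt0r_neq0 x0 /lt0r_neq0 y0 /lt0r_neq0 z0.
move=> fracE; apply/eqP; rewrite -(eqr_nat R) !(natrD, natrM); apply/eqP.
have -> : 4%:R * x%:R * y%:R * z%:R
          = p%:R * (x%:R * y%:R * z%:R) * (4%:R / p%:R) :> R by field.
by rewrite fracE; field; rewrite x0 y0 z0.
Qed.

Theorem theorem1 (p x y z : nat) :
  prime p -> (0 < x)%N -> (x <= y)%N -> (y <= z)%N ->
  (4%:R / p%:R : rat) = 1 / x%:R + 1 / y%:R + 1 / z%:R ->
  (4 * (x * y)%:Z - (x + y)%:Z * p%:Z : int)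
    = ((gcdn y p) * (gcdn (x * y) (x + y)))%N%:Z.
Proof.
move=> p_pr x_gt0 le_xy le_yz fracE.
have y_gt0 := leq_trans x_gt0 le_xy; have z_gt0 := leq_trans y_gt0 le_yz.
have fourE := unit_fractions_natE (prime_gt0 p_pr) x_gt0 y_gt0 z_gt0 fracE.
rewrite -(defectE p_pr x_gt0 le_xy le_yz fourE).
by rewrite -subzn ?(leq_sum_mul_four x_gt0 le_xy le_yz fourE) // !PoszM.
Qed.
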